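(* Let $\alpha\in(0,1)$ and let $\phi:[0,1]\to[0,\infty)$ be twice continuously differentiable on $(0,1]$ with finite constants $W>0$, $c$, $c'$ such that $(2-\alpha)Wp^{\alpha-2}+c'\le|\phi^{(2)}(p)|\le(2-\alpha)Wp^{\alpha-2}+c$ for all $p\in(0,1]$. Then for $\Delta\in(0,1]$ and positive integers $L$, $$E_L(\phi,[0,\Delta])\lesssim\Big(\frac{\Delta}{L^2}\Big)^{\alpha}.$$
   Context: $E_L(\phi,I)=\inf_{q}\sup_{x\in I}|\phi(x)-q(x)|$, the infimum over all real polynomials $q$ of degree at most $L$. $a\lesssim b$ means $a\le Cb$ for a positive constant $C$ not depending on $L,\Delta$ (possibly on $\phi,\alpha$). *)

From Stdlib Require Import Reals.
From Coquelicot Require Import Coquelicot.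
Open Scope R_scope.

Definition poly_eval (a : nat -> R) (L : nat) (x : R) : R :=
  sum_f_R0 (fun k => a k * x ^ k) L.

Definition sup_err (phi : R -> R) (a : nat -> R) (L : nat) (lo hi : R) : Rbar :=
  Lub_Rbar (fun y => exists x, lo <= x <= hi /\ y = Rabs (phi x - poly_eval a L x)).

(* E_L(phi, [lo,hi]) = inf over real polynomials q of degree <= L of
   sup_{x in [lo,hi]} |phi x - q x|  (an extended real; +oo if all sups are +oo). *)
Definition E_L (phi : R -> R) (L : nat) (lo hi : R) : Rbar :=
  Glb_Rbar (fun e : R => exists a : nat -> R, sup_err phi a L lo hi = Finite e).

From Stdlib Require Import Reals Lra Lia.
From Coquelicot Require Import Coquelicot.
Open Scope R_scope.

(* After the substitution x = D (1 - y) / 2 and the subtraction of a linear term, phi becomes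
   a function H on [-1, 1] with H'(0) = 0 and |H''(y)| <= M (1 - y)^(alpha-2), M ~ D^alpha.
   Integrating twice, H is alpha-Holder with constant ~ M, and the even 2 PI-periodic function
   g(th) = H(cos th) has second differences |g(th+t) + g(th-t) - 2 g(th)| <~ M t^(2 alpha):
   near y = 1 one uses the bound on H'', elsewhere the Holder bound, as cos moves by O(t^2)
   there.  Jackson's theorem (averaging g against D_r^4, D_r the Dirichlet kernel) gives a
   cosine polynomial of degree 4 r <= L within <~ M r^(-2 alpha) of g.  Since cos (k th) is a
   polynomial of degree k in cos th = 1 - 2 x / D, this is a polynomial of degree <= L in x,
   within <~ D^alpha L^(-2 alpha) = (D / L^2)^alpha of phi on [0, D]. *)

Definition in_span (e : nat -> R -> R) (n : nat) (f : R -> R) : Prop :=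
  exists c : nat -> R, forall t, f t = sum_f_R0 (fun k => c k * e k t) n.

Section Span.
Variable e : nat -> R -> R.

Lemma in_span_ext n f g : (forall t, f t = g t) -> in_span e n f -> in_span e n g.
Proof. intros Hfg [c Hc]. exists c. intros t. rewrite <- Hfg. apply Hc. Qed.

Lemma in_span_add n f g :
  in_span e n f -> in_span e n g -> in_span e n (fun t => f t + g t).
Proof.
  intros [c Hc] [d Hd]. exists (fun k => c k + d k). intros t.
  rewrite Hc, Hd, <- sum_plus. apply sum_eq. intros; ring.
Qed.

Lemma in_span_scal n f a : in_span e n f -> in_span e n (fun t => a * f t).
Proof.
  intros [c Hc]. exists (fun k => a * c k). intros t.
  rewrite Hc, scal_sum. apply sum_eq. intros; ring.
Qed.

Lemma in_span_widen n m f : (n <= m)%nat -> in_span e n f -> in_span e m f.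
Proof.
  intros Hnm [c Hc]. exists (fun k => if Nat.leb k n then c k else 0). intros t.
  rewrite Hc. induction Hnm.
  - apply sum_eq. intros i Hi. destruct (Nat.leb_spec i n); [reflexivity | lia].
  - rewrite tech5, <- IHHnm. destruct (Nat.leb_spec (S m) n); [lia | ring].
Qed.

Lemma in_span_basis n i : (i <= n)%nat -> in_span e n (e i).
Proof.
  intros Hi. apply in_span_widen with i; auto.
  exists (fun k => if Nat.eqb k i then 1 else 0). intros t. destruct i.
  - simpl. ring.
  - rewrite tech5, sum_eq_R0, Nat.eqb_refl; [ring |].
    intros j Hj. destruct (Nat.eqb_spec j (S i)); [lia | ring].
Qed.

Lemma in_span_lincomb m n (b : nat -> R) (F : nat -> R -> R) :
  (forall k, (k <= n)%nat -> in_span e m (F k)) ->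
  in_span e m (fun t => sum_f_R0 (fun k => b k * F k t) n).
Proof.
  induction n as [|n IH]; intros HF; simpl.
  - apply in_span_scal, HF; lia.
  - apply in_span_add.
    + apply IH. intros; apply HF; lia.
    + apply in_span_scal, HF; lia.
Qed.

End Span.

Definition monomial (k : nat) (x : R) : R := x ^ k.

Lemma in_span_monomial_const n a : in_span monomial n (fun _ => a).
Proof.
  apply in_span_widen with O; [lia |].
  exists (fun _ => a). intros; unfold monomial; simpl; ring.
Qed.

Lemma in_span_monomial_mulx n f :
  in_span monomial n f -> in_span monomial (S n) (fun x => x * f x).
Proof.
  intros [c Hc]. exists (fun k => match k with O => 0 | S k' => c k' end). intros x.
  rewrite Hc, (decomp_sum _ (S n)) by lia. simpl pred. unfold monomial.
  rewrite scal_sum. simpl. rewrite Rmult_0_l, Rplus_0_l. apply sum_eq. intros; simpl; ring.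
Qed.

Lemma in_span_monomial_affine_pow u v k :
  in_span monomial k (fun x => (u * x + v) ^ k).
Proof.
  induction k as [|k IH].
  - apply (in_span_monomial_const 0 1).
  - apply in_span_ext with (fun x => u * (x * (u * x + v) ^ k) + v * (u * x + v) ^ k).
    { intros x; simpl; ring. }
    apply in_span_add.
    + apply in_span_scal, in_span_monomial_mulx, IH.
    + apply in_span_scal. apply in_span_widen with k; auto.
Qed.

Lemma in_span_monomial_comp_affine n P u v :
  in_span monomial n P -> in_span monomial n (fun x => P (u * x + v)).
Proof.
  intros [c Hc]. apply in_span_ext with
    (fun x => sum_f_R0 (fun k => c k * (fun y => (u * y + v) ^ k) x) n).
  { intros x. rewrite Hc. reflexivity. }
  apply in_span_lincomb. intros k Hk.
  apply in_span_widen with k; auto. apply in_span_monomial_affine_pow.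
Qed.

Definition cos_mode (k : nat) (t : R) : R := cos (INR k * t).

Lemma in_span_cos_mode_mul_cos m j h :
  in_span cos_mode m h -> in_span cos_mode (m + j) (fun t => cos (INR j * t) * h t).
Proof.
  intros [c Hc].
  apply in_span_ext with
    (fun t => sum_f_R0 (fun k => c k * (cos (INR j * t) * cos_mode k t)) m).
  { intros t. rewrite Hc, scal_sum. apply sum_eq. intros; ring. }
  apply in_span_lincomb. intros k Hk.
  set (d := if Nat.leb j k then (k - j)%nat else (j - k)%nat).
  apply in_span_ext with (fun t => /2 * cos_mode (j + k) t + /2 * cos_mode d t).
  { intros t. unfold cos_mode, d. rewrite plus_INR.
    replace (cos (INR j * t) * cos (INR k * t))
      with (/2 * cos ((INR j + INR k) * t) + /2 * cos ((INR j - INR k) * t))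
      by (replace ((INR j + INR k) * t) with (INR j * t + INR k * t) by ring;
          replace ((INR j - INR k) * t) with (INR j * t - INR k * t) by ring;
          rewrite cos_plus, cos_minus; field).
    destruct (Nat.leb_spec j k); rewrite minus_INR by lia; [| reflexivity].
    rewrite <- (cos_neg ((INR j - INR k) * t)).
    replace (- ((INR j - INR k) * t)) with ((INR k - INR j) * t) by ring.
    reflexivity. }
  apply in_span_add; apply in_span_scal; apply in_span_basis; unfold d;
    destruct (Nat.leb_spec j k); lia.
Qed.

Lemma in_span_cos_mode_mul n m f h :
  in_span cos_mode n f -> in_span cos_mode m h ->
  in_span cos_mode (n + m) (fun t => f t * h t).
Proof.
  intros [c Hc] Hh.
  apply in_span_ext with (fun t => sum_f_R0 (fun j => c j * (cos (INR j * t) * h t)) n).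
  { intros t. rewrite Hc, Rmult_comm, scal_sum. apply sum_eq. intros; unfold cos_mode; ring. }
  apply in_span_lincomb. intros j Hj. apply in_span_widen with (m + j)%nat; [lia |].
  apply in_span_cos_mode_mul_cos; auto.
Qed.

Lemma chebyshev k :
  exists T, in_span monomial k T /\ forall th, cos (INR k * th) = T (cos th).
Proof.
  revert k. enough (Hpair : forall k,
    (exists T, in_span monomial k T /\ forall th, cos (INR k * th) = T (cos th)) /\
    (exists T, in_span monomial (S k) T /\ forall th, cos (INR (S k) * th) = T (cos th)))
    by apply Hpair.
  induction k as [|k IH].
  - split.
    + exists (fun _ => 1). split; [apply in_span_monomial_const |].
      intros th. simpl. rewrite Rmult_0_l, cos_0. reflexivity.
    + exists (fun y => y). split.
      * apply in_span_ext with (fun y => y * 1); [intros; ring |].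
        apply in_span_monomial_mulx, in_span_monomial_const.
      * intros th. simpl. f_equal; ring.
  - destruct IH as [[T0 [HT0 E0]] [T1 [HT1 E1]]].
    split; [exists T1; auto |].
    exists (fun y => 2 * (y * T1 y) + -1 * T0 y). split.
    + apply in_span_add; apply in_span_scal.
      * apply in_span_monomial_mulx; auto.
      * apply in_span_widen with k; auto.
    + intros th. rewrite <- E0, <- E1, !S_INR.
      replace ((INR k + 1 + 1) * th) with ((INR k + 1) * th + th) by ring.
      replace (INR k * th) with ((INR k + 1) * th - th) by ring.
      rewrite cos_plus, cos_minus. ring.
Qed.

Lemma cos_poly_eq_poly_cos n f :
  in_span cos_mode n f ->
  exists Q, in_span monomial n Q /\ forall th, f th = Q (cos th).
Proof.
  intros [b Hb].
  assert (HT : forall k, exists T, in_span monomial k T /\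
                 forall th, cos_mode k th = T (cos th)) by apply chebyshev.
  revert f Hb. induction n as [|n IH]; intros f Hb.
  - exists (fun _ => b O). split; [apply in_span_monomial_const |].
    intros th. rewrite Hb. simpl. unfold cos_mode. simpl. rewrite Rmult_0_l, cos_0. ring.
  - destruct (IH (fun th => sum_f_R0 (fun k => b k * cos_mode k th) n))
      as [Q [HQ EQ]]; [intros; reflexivity |].
    destruct (HT (S n)) as [T [HTs ET]].
    exists (fun y => Q y + b (S n) * T y). split.
    + apply in_span_add; [apply in_span_widen with n; auto | apply in_span_scal; auto].
    + intros th. rewrite Hb. simpl. rewrite EQ, ET. reflexivity.
Qed.

Lemma Rabs_sin_le x : Rabs (sin x) <= Rabs x.
Proof.
  destruct (MVT_gen sin 0 x cos) as [c [_ Ec]].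
  - intros; apply is_derive_sin.
  - intros; apply continuity_sin.
  - rewrite sin_0, !Rminus_0_r in Ec. rewrite Ec, Rabs_mult.
    assert (Rabs (cos c) <= 1) by (apply Rabs_le, COS_bound).
    pose proof (Rabs_pos x). nra.
Qed.

Lemma cos_ge_1_minus_sqr_half x : 1 - x ^ 2 / 2 <= cos x.
Proof.
  replace (cos x) with (1 - 2 * (sin (x / 2) * sin (x / 2)))
    by (rewrite <- Rmult_assoc, <- cos_2a_sin; f_equal; field).
  pose proof (Rabs_sin_le (x / 2)). pose proof (Rabs_pos (sin (x / 2))).
  rewrite <- (Rabs_right (sin (x / 2) * sin (x / 2))), Rabs_mult
    by (apply Rle_ge, Rle_0_sqr).
  assert (Rabs (x / 2) * Rabs (x / 2) = x ^ 2 / 4)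
    by (rewrite <- Rabs_mult, Rabs_right; [field | apply Rle_ge; nra]).
  nra.
Qed.

Lemma cos_ge_half x : Rabs x <= 1 / 2 -> 1 / 2 <= cos x.
Proof.
  intros Hx. pose proof (cos_ge_1_minus_sqr_half x).
  assert (x ^ 2 <= 1 / 4).
  { rewrite <- (Rabs_right (x ^ 2)), <- RPow_abs by (apply Rle_ge; nra).
    pose proof (Rabs_pos x). nra. }
  lra.
Qed.

(* From the Taylor lower bound [sin a >= a - a^3/6 + a^5/120 - a^7/5040] on [0, 2]. *)
Lemma sin_half_ge t : 0 <= t <= PI -> t / 8 <= sin (t / 2).
Proof.
  intros Ht. pose proof PI_4. pose proof PI2_3_2.
  destruct (SIN (t / 2)) as [Hlb _]; try lra.
  replace (sin_lb (t / 2))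
    with (t / 2 - (t / 2) ^ 3 / 6 + (t / 2) ^ 5 / 120 - (t / 2) ^ 7 / 5040) in Hlb
    by (unfold sin_lb, sin_approx, sin_term; simpl; field).
  set (a := t / 2) in *. assert (0 <= a <= 2) by (unfold a; lra).
  assert (a ^ 2 <= 4) by nra.
  assert (a ^ 6 <= 64).
  { replace (a ^ 6) with (a ^ 2 * a ^ 2 * a ^ 2) by ring.
    assert (0 <= a ^ 2) by nra. assert (a ^ 2 * a ^ 2 <= 16) by nra. nra. }
  assert (0 <= a ^ 5) by (apply pow_le; lra).
  assert (a ^ 7 <= 64 * a) by (replace (a ^ 7) with (a ^ 6 * a) by ring; nra).
  assert (a ^ 3 <= 4 * a) by (replace (a ^ 3) with (a ^ 2 * a) by ring; nra).
  assert (t = 2 * a) by (unfold a; field). lra.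
Qed.

Lemma Rpower_pos x y : 0 < Rpower x y.
Proof. apply exp_pos. Qed.

Lemma Rpower_base_1 e : Rpower 1 e = 1.
Proof. unfold Rpower. rewrite ln_1, Rmult_0_r, exp_0. reflexivity. Qed.

Lemma Rpower_le_l_nonpos a b e : 0 < a <= b -> e <= 0 -> Rpower b e <= Rpower a e.
Proof.
  intros Hab He. replace e with (- - e) by ring. rewrite !(Rpower_Ropp _ (- e)).
  apply Rinv_le_contravar; [apply Rpower_pos | apply Rle_Rpower_l; lra].
Qed.

Lemma Rpower_pow2 t a : 0 < t -> Rpower (t ^ 2) a = Rpower t (2 * a).
Proof.
  intros Ht. rewrite <- Rpower_mult. f_equal.
  replace 2 with (INR 2) by (simpl; ring). rewrite Rpower_pow; auto.
Qed.

Lemma Rpower_add_le q d a : 0 < q -> 0 < d -> 0 < a < 1 ->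
  Rpower (q + d) a <= Rpower q a + Rpower d a.
Proof.
  intros Hq Hd Ha.
  assert (E : forall x, 0 < x -> Rpower x a = x * Rpower x (a - 1)).
  { intros x Hx. replace a with (1 + (a - 1)) at 1 by ring. rewrite Rpower_plus, Rpower_1; auto. }
  rewrite (E (q + d)), (E q), (E d) by lra.
  assert (Rpower (q + d) (a - 1) <= Rpower q (a - 1)) by (apply Rpower_le_l_nonpos; lra).
  assert (Rpower (q + d) (a - 1) <= Rpower d (a - 1)) by (apply Rpower_le_l_nonpos; lra).
  nra.
Qed.

Lemma Rpower_le_scaled t m beta : 0 < t -> 1 <= m -> 0 < beta < 2 ->
  Rpower t beta <= Rpower m (- beta) * (1 + (m * t) ^ 2).
Proof.
  intros Ht Hm Hb.
  replace (Rpower t beta) with (Rpower m (- beta) * Rpower (m * t) beta).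
  2: { rewrite <- Rpower_mult_distr, <- Rmult_assoc, Rpower_Ropp, Rinv_l by (try lra;
         apply Rgt_not_eq, Rpower_pos). ring. }
  apply Rmult_le_compat_l; [left; apply Rpower_pos |].
  assert (0 < m * t) by nra.
  destruct (Rle_dec (m * t) 1).
  - assert (Rpower (m * t) beta <= Rpower 1 beta) by (apply Rle_Rpower_l; lra).
    rewrite Rpower_base_1 in *. nra.
  - assert (Rpower (m * t) beta <= Rpower (m * t) (INR 2)) by (apply Rle_Rpower; simpl; lra).
    rewrite Rpower_pow in * by lra. lra.
Qed.

(* Instances at R of Coquelicot's lemmas on normed modules, stated with [Rplus] and [Rmult]
   so that they unify with goals about real functions. *)
Lemma ex_RInt_continuous_R (f : R -> R) a b : (forall t, continuous f t) -> ex_RInt f a b.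
Proof. intros Hf. apply (ex_RInt_continuous (V := R_CompleteNormedModule)). auto. Qed.

Lemma continuous_of_ex_derive (f : R -> R) x : ex_derive f x -> continuous f x.
Proof. apply (ex_derive_continuous (K := R_AbsRing) (V := R_NormedModule)). Qed.

Lemma continuity_pt_of_ex_derive (f : R -> R) x : ex_derive f x -> continuity_pt f x.
Proof. intros Hf. apply derivable_continuous_pt, ex_derive_Reals_0, Hf. Qed.

Lemma continuous_plus_R (f g : R -> R) t :
  continuous f t -> continuous g t -> continuous (fun t => f t + g t) t.
Proof. apply (continuous_plus f g). Qed.

Lemma continuous_mult_R (f g : R -> R) t :
  continuous f t -> continuous g t -> continuous (fun t => f t * g t) t.
Proof. apply (continuous_mult f g). Qed.

Lemma continuous_comp_affine (f : R -> R) u v t :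
  (forall x, continuous f x) -> continuous (fun t => f (u * t + v)) t.
Proof.
  intros Hf. apply (continuous_comp (fun t => u * t + v) f); [| apply Hf].
  apply continuous_of_ex_derive. auto_derive. auto.
Qed.

Lemma continuous_comp_opp (f : R -> R) t :
  (forall x, continuous f x) -> continuous (fun t => f (- t)) t.
Proof.
  intros Hf. apply (continuous_ext (fun t => f (-1 * t + 0))).
  - intros; f_equal; ring.
  - apply continuous_comp_affine, Hf.
Qed.

Lemma RInt_ext_R (f g : R -> R) a b :
  (forall x, Rmin a b < x < Rmax a b -> f x = g x) -> RInt f a b = RInt g a b :> R.
Proof. apply RInt_ext. Qed.

Lemma RInt_plus_R (f g : R -> R) a b : ex_RInt f a b -> ex_RInt g a b ->
  RInt (fun x => f x + g x) a b = RInt f a b + RInt g a b.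
Proof. apply (RInt_plus (V := R_CompleteNormedModule)). Qed.

Lemma RInt_minus_R (f g : R -> R) a b : ex_RInt f a b -> ex_RInt g a b ->
  RInt (fun x => f x - g x) a b = RInt f a b - RInt g a b.
Proof. apply (RInt_minus (V := R_CompleteNormedModule)). Qed.

Lemma RInt_scal_R (f : R -> R) a b l : ex_RInt f a b ->
  RInt (fun x => l * f x) a b = l * RInt f a b.
Proof. apply (RInt_scal (V := R_CompleteNormedModule)). Qed.

Lemma RInt_Chasles_R (f : R -> R) a b c : ex_RInt f a b -> ex_RInt f b c ->
  RInt f a c = RInt f a b + RInt f b c.
Proof. intros. symmetry. apply (RInt_Chasles (V := R_CompleteNormedModule)); auto. Qed.

Lemma RInt_comp_lin_R (f : R -> R) u v a b : ex_RInt f (u * a + v) (u * b + v) ->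
  RInt (fun y => u * f (u * y + v)) a b = RInt f (u * a + v) (u * b + v).
Proof. apply (RInt_comp_lin (V := R_CompleteNormedModule)). Qed.

Lemma RInt_swap_R (f : R -> R) a b : ex_RInt f a b -> RInt f b a = - RInt f a b.
Proof. intros. rewrite <- (opp_RInt_swap (V := R_CompleteNormedModule)); auto. Qed.

Lemma RInt_sum_R (F : nat -> R -> R) n a b : (forall k x, continuous (F k) x) ->
  RInt (fun s => sum_f_R0 (fun k => F k s) n) a b = sum_f_R0 (fun k => RInt (F k) a b) n.
Proof.
  intros HF. induction n as [|n IH]; simpl; [reflexivity |].
  assert (Hsum : forall x, continuous (fun s => sum_f_R0 (fun k => F k s) n) x).
  { intros x. clear IH. induction n as [|n IHn]; simpl; [apply HF |].
    apply continuous_plus_R; auto. }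
  rewrite RInt_plus_R, IH by (apply ex_RInt_continuous_R; auto).
  reflexivity.
Qed.

Lemma RInt_symmetric (f : R -> R) a : (forall x, continuous f x) ->
  RInt f (- a) a = RInt (fun t => f t + f (- t)) 0 a :> R.
Proof.
  intros Hf.
  assert (Hfo : forall x, continuous (fun t => f (- t)) x)
    by (intros; apply continuous_comp_opp, Hf).
  rewrite (RInt_Chasles_R f (- a) 0 a), RInt_plus_R by (apply ex_RInt_continuous_R; auto).
  rewrite (RInt_swap_R f 0 (- a)) by (apply ex_RInt_continuous_R; auto).
  pose proof (RInt_comp_lin_R f (-1) 0 0 a) as Hlin.
  replace (-1 * 0 + 0) with 0 in Hlin by ring. replace (-1 * a + 0) with (- a) in Hlin by ring.
  rewrite <- Hlin by (apply ex_RInt_continuous_R; auto).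
  rewrite (RInt_ext_R _ (fun y => -1 * f (- y))) by (intros; do 2 f_equal; ring).
  rewrite RInt_scal_R by (apply ex_RInt_continuous_R; auto).
  ring.
Qed.

Lemma RInt_periodic (F : R -> R) a :
  (forall x, continuous F x) -> (forall x, F (x + 2 * PI) = F x) ->
  RInt F a (a + 2 * PI) = RInt F (- PI) PI :> R.
Proof.
  intros Hc Hp.
  rewrite (RInt_Chasles_R F a (- PI) (a + 2 * PI)), (RInt_Chasles_R F (- PI) PI (a + 2 * PI))
    by (apply ex_RInt_continuous_R; auto).
  pose proof (RInt_comp_lin_R F 1 (2 * PI) (- PI) a) as Hlin.
  replace (1 * - PI + 2 * PI) with PI in Hlin by ring.
  replace (1 * a + 2 * PI) with (a + 2 * PI) in Hlin by ring.
  rewrite <- Hlin by (apply ex_RInt_continuous_R; auto).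
  rewrite (RInt_ext_R (fun y => 1 * F (1 * y + 2 * PI)) F)
    by (intros; rewrite !Rmult_1_l; apply Hp).
  rewrite (RInt_swap_R F (- PI) a) by (apply ex_RInt_continuous_R; auto).
  ring.
Qed.

Fixpoint dirichlet (r : nat) (t : R) : R :=
  match r with
  | O => 1
  | S r' => dirichlet r' t + 2 * cos (INR r * t)
  end.

Lemma dirichlet_abs_le r t : Rabs (dirichlet r t) <= 2 * INR r + 1.
Proof.
  induction r as [|r IH]; cbn [dirichlet].
  - rewrite Rabs_R1. simpl. lra.
  - eapply Rle_trans; [apply Rabs_triang |].
    rewrite Rabs_mult, (Rabs_right 2) by lra.
    assert (Rabs (cos (INR (S r) * t)) <= 1) by apply Rabs_le, COS_bound.
    rewrite S_INR in *. lra.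
Qed.

Lemma dirichlet_mul_sin_half r t : dirichlet r t * sin (t / 2) = sin ((INR r + / 2) * t).
Proof.
  induction r as [|r IH]; cbn [dirichlet].
  - simpl. rewrite Rmult_1_l. f_equal; field.
  - rewrite Rmult_plus_distr_r, IH, S_INR.
    replace ((INR r + / 2) * t) with ((INR r + 1) * t - t / 2) by field.
    replace ((INR r + 1 + / 2) * t) with ((INR r + 1) * t + t / 2) by field.
    rewrite sin_plus, sin_minus. ring.
Qed.

Lemma dirichlet_abs_le_inv r t : 0 < t <= PI -> Rabs (dirichlet r t) <= 8 / t.
Proof.
  intros Ht. pose proof (sin_half_ge t ltac:(lra)).
  assert (Rabs (dirichlet r t) * sin (t / 2) <= 1).
  { rewrite <- (Rabs_right (sin (t / 2))), <- Rabs_mult, dirichlet_mul_sin_half by lra.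
    apply Rabs_le, SIN_bound. }
  apply Rmult_le_reg_r with (t / 8); [lra |].
  replace (8 / t * (t / 8)) with 1 by (field; lra).
  pose proof (Rabs_pos (dirichlet r t)). nra.
Qed.

Lemma dirichlet_ge r t : 0 <= t -> INR r * t <= 1 / 2 -> INR r + 1 <= dirichlet r t.
Proof.
  induction r as [|r IH]; intros Ht Hrt; cbn [dirichlet].
  - simpl. lra.
  - rewrite S_INR in *. pose proof (pos_INR r).
    assert (1 / 2 <= cos ((INR r + 1) * t)) by (apply cos_ge_half; rewrite Rabs_right; nra).
    assert (INR r + 1 <= dirichlet r t) by (apply IH; nra).
    lra.
Qed.

Lemma continuous_dirichlet r t : continuous (dirichlet r) t.
Proof.
  induction r as [|r IH]; cbn [dirichlet]; [apply continuous_const |].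
  apply continuous_plus_R; auto.
  apply continuous_of_ex_derive. auto_derive. auto.
Qed.

Lemma dirichlet_even r t : dirichlet r (- t) = dirichlet r t.
Proof.
  induction r as [|r IH]; cbn [dirichlet]; [reflexivity |].
  rewrite IH, <- cos_neg. do 3 f_equal. ring.
Qed.

Lemma dirichlet_periodic r t : dirichlet r (t + 2 * PI) = dirichlet r t.
Proof.
  induction r as [|r IH]; cbn [dirichlet]; [reflexivity |].
  rewrite IH, <- (cos_period (INR (S r) * t) (S r)). do 3 f_equal. ring.
Qed.

Lemma in_span_dirichlet r : in_span cos_mode r (dirichlet r).
Proof.
  induction r as [|r IH]; cbn [dirichlet].
  - exists (fun _ => 1). intros t. unfold cos_mode. simpl. rewrite Rmult_0_l, cos_0. ring.
  - apply in_span_add; [apply in_span_widen with r; auto |].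
    apply in_span_scal, (in_span_basis cos_mode (S r) (S r)). lia.
Qed.

Definition jackson_kernel (r : nat) (t : R) : R :=
  dirichlet r t * dirichlet r t * (dirichlet r t * dirichlet r t).

Lemma in_span_jackson_kernel r : in_span cos_mode (4 * r) (jackson_kernel r).
Proof.
  apply in_span_widen with ((r + r) + (r + r))%nat; [lia |].
  apply in_span_cos_mode_mul; apply in_span_cos_mode_mul; apply in_span_dirichlet.
Qed.

Lemma jackson_kernel_ge0 r t : 0 <= jackson_kernel r t.
Proof. apply Rmult_le_pos; apply Rle_0_sqr. Qed.

Lemma continuous_jackson_kernel r t : continuous (jackson_kernel r) t.
Proof.
  unfold jackson_kernel.
  repeat apply continuous_mult_R; apply continuous_dirichlet.
Qed.

Lemma jackson_kernel_even r t : jackson_kernel r (- t) = jackson_kernel r t.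
Proof. unfold jackson_kernel. rewrite dirichlet_even. reflexivity. Qed.

Lemma jackson_kernel_periodic r t : jackson_kernel r (t + 2 * PI) = jackson_kernel r t.
Proof. unfold jackson_kernel. rewrite dirichlet_periodic. reflexivity. Qed.

Lemma jackson_kernel_le_const r t : jackson_kernel r t <= 16 * (INR r + 1) ^ 4.
Proof.
  pose proof (dirichlet_abs_le r t). pose proof (Rabs_pos (dirichlet r t)). pose proof (pos_INR r).
  assert (Hsq : dirichlet r t * dirichlet r t <= 4 * (INR r + 1) ^ 2).
  { rewrite <- (Rabs_right (_ * _)), Rabs_mult by (apply Rle_ge, Rle_0_sqr). nra. }
  pose proof (Rle_0_sqr (dirichlet r t)). unfold Rsqr in *.
  unfold jackson_kernel. replace (16 * (INR r + 1) ^ 4)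
    with (4 * (INR r + 1) ^ 2 * (4 * (INR r + 1) ^ 2)) by ring.
  apply Rmult_le_compat; auto.
Qed.

Lemma jackson_kernel_le_inv r t : 0 < t <= PI -> jackson_kernel r t <= 4096 / t ^ 4.
Proof.
  intros Ht. pose proof (dirichlet_abs_le_inv r t Ht). pose proof (Rabs_pos (dirichlet r t)).
  assert (Hsq : dirichlet r t * dirichlet r t <= 64 / t ^ 2).
  { rewrite <- (Rabs_right (_ * _)), Rabs_mult by (apply Rle_ge, Rle_0_sqr).
    replace (64 / t ^ 2) with (8 / t * (8 / t)) by (field; lra). nra. }
  pose proof (Rle_0_sqr (dirichlet r t)). unfold Rsqr in *.
  unfold jackson_kernel. replace (4096 / t ^ 4) with (64 / t ^ 2 * (64 / t ^ 2)) by (field; lra).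
  apply Rmult_le_compat; auto.
Qed.

(* Near 0 the kernel is at least (r+1)^4 on an interval of length 1/(2(r+1)). *)
Lemma RInt_jackson_kernel_ge r : (INR r + 1) ^ 3 / 2 <= RInt (jackson_kernel r) 0 PI.
Proof.
  pose proof (pos_INR r) as Hr. pose proof PI2_3_2.
  set (d := / (2 * (INR r + 1))).
  assert (Hd : 0 < d <= 1 / 2).
  { unfold d. split; [apply Rinv_0_lt_compat; lra |].
    assert (/ (2 * (INR r + 1)) <= / 2) by (apply Rinv_le_contravar; lra). lra. }
  assert (Hint : forall a b, ex_RInt (jackson_kernel r) a b)
    by (intros; apply ex_RInt_continuous_R, continuous_jackson_kernel).
  rewrite (RInt_Chasles_R _ 0 d PI) by auto.
  assert (0 <= RInt (jackson_kernel r) d PI)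
    by (apply RInt_ge_0; auto; [lra | intros; apply jackson_kernel_ge0]).
  assert (RInt (fun _ => (INR r + 1) ^ 4) 0 d <= RInt (jackson_kernel r) 0 d).
  { apply RInt_le; auto; [lra | apply ex_RInt_const |].
    intros t Ht.
    assert (INR r + 1 <= dirichlet r t).
    { apply dirichlet_ge; [lra |].
      apply Rle_trans with (INR r * d); [apply Rmult_le_compat_l; lra |].
      unfold d. apply Rmult_le_reg_r with (2 * (INR r + 1)); [lra |].
      rewrite Rmult_assoc, Rinv_l by lra. nra. }
    unfold jackson_kernel.
    assert ((INR r + 1) * (INR r + 1) <= dirichlet r t * dirichlet r t) by nra.
    simpl. nra. }
  rewrite RInt_const in *.
  change (scal (d - 0) ((INR r + 1) ^ 4)) with ((d - 0) * (INR r + 1) ^ 4) in *.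
  replace ((INR r + 1) ^ 3 / 2) with ((d - 0) * (INR r + 1) ^ 4) by (unfold d; field; lra).
  lra.
Qed.

Lemma RInt_sqr d : RInt (fun t => t ^ 2) 0 d = d ^ 3 / 3.
Proof.
  apply is_RInt_unique.
  replace (d ^ 3 / 3) with (minus ((fun t => t ^ 3 / 3) d) ((fun t => t ^ 3 / 3) 0))
    by (unfold minus, plus, opp; simpl; field).
  apply (is_RInt_derive (fun t => t ^ 3 / 3)).
  - intros. auto_derive; [auto | field].
  - intros. apply continuous_of_ex_derive. auto_derive. auto.
Qed.

Lemma RInt_inv_sqr a b : 0 < a <= b -> RInt (fun t => / t ^ 2) a b = / a - / b.
Proof.
  intros Hab. apply is_RInt_unique.
  replace (/ a - / b) with (minus ((fun t => - / t) b) ((fun t => - / t) a))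
    by (unfold minus, plus, opp; simpl; ring).
  apply (is_RInt_derive (fun t => - / t)); intros x Hx;
    rewrite Rmin_left, Rmax_right in Hx by lra.
  - auto_derive; [lra | field; lra].
  - apply continuous_of_ex_derive. auto_derive. nra.
Qed.

(* Split at 1/(r+1): below, use the uniform bound; above, the bound 4096/t^4. *)
Lemma RInt_sqr_mul_jackson_kernel_le r :
  RInt (fun t => t ^ 2 * jackson_kernel r t) 0 PI <= 4200 * (INR r + 1).
Proof.
  pose proof (pos_INR r) as Hr. pose proof PI2_3_2.
  set (d := / (INR r + 1)).
  assert (Hd : 0 < d <= 1).
  { unfold d. split; [apply Rinv_0_lt_compat; lra |].
    rewrite <- Rinv_1. apply Rinv_le_contravar; lra. }
  assert (Hsq : forall t, continuous (fun t => t ^ 2) t)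
    by (intros; apply continuous_of_ex_derive; auto_derive; auto).
  assert (Hc : forall t, continuous (fun t => t ^ 2 * jackson_kernel r t) t)
    by (intros; apply continuous_mult_R; [apply Hsq | apply continuous_jackson_kernel]).
  assert (Hinv : ex_RInt (fun t => / t ^ 2) d PI).
  { apply (ex_RInt_continuous (V := R_CompleteNormedModule)). intros z Hz.
    rewrite Rmin_left, Rmax_right in Hz by lra.
    apply continuous_of_ex_derive. auto_derive. nra. }
  rewrite (RInt_Chasles_R _ 0 d PI) by (apply ex_RInt_continuous_R; auto).
  assert (Hlow : RInt (fun t => t ^ 2 * jackson_kernel r t) 0 d
                 <= RInt (fun t => 16 * (INR r + 1) ^ 4 * t ^ 2) 0 d).
  { apply RInt_le; [lra | apply ex_RInt_continuous_R; auto | |].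
    - apply ex_RInt_continuous_R. intros; apply continuous_mult_R; auto using continuous_const.
    - intros t _. pose proof (jackson_kernel_le_const r t).
      rewrite (Rmult_comm (16 * _)). apply Rmult_le_compat_l; [nra | auto]. }
  assert (Hhigh : RInt (fun t => t ^ 2 * jackson_kernel r t) d PI
                  <= RInt (fun t => 4096 * / t ^ 2) d PI).
  { apply RInt_le; [lra | apply ex_RInt_continuous_R; auto | |].
    - apply (ex_RInt_scal (V := R_CompleteNormedModule)) with (k := 4096) in Hinv. exact Hinv.
    - intros t Ht. pose proof (jackson_kernel_le_inv r t ltac:(lra)).
      replace (4096 * / t ^ 2) with (t ^ 2 * (4096 / t ^ 4)) by (field; lra).
      apply Rmult_le_compat_l; [nra | auto]. }
  rewrite RInt_scal_R, RInt_sqr in Hlow by (apply ex_RInt_continuous_R; auto).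
  rewrite RInt_scal_R, RInt_inv_sqr in Hhigh by (auto; lra).
  replace (16 * (INR r + 1) ^ 4 * (d ^ 3 / 3)) with (16 / 3 * (INR r + 1)) in Hlow
    by (unfold d; field; lra).
  assert (/ d = INR r + 1) by (unfold d; apply Rinv_inv).
  assert (0 < / PI) by (apply Rinv_0_lt_compat; lra).
  lra.
Qed.

Lemma RInt_shift_periodic (F : R -> R) th :
  (forall x, continuous F x) -> (forall x, F (x + 2 * PI) = F x) ->
  RInt (fun t => F (th + t)) (- PI) PI = RInt F (- PI) PI :> R.
Proof.
  intros Hc Hp.
  rewrite <- (RInt_periodic F (- PI + th)) by auto.
  pose proof (RInt_comp_lin_R F 1 th (- PI) PI) as Hlin.
  replace (1 * - PI + th) with (- PI + th) in Hlin by ring.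
  replace (1 * PI + th) with (- PI + th + 2 * PI) in Hlin by ring.
  rewrite <- Hlin by (apply ex_RInt_continuous_R; auto).
  apply RInt_ext_R. intros. rewrite Rmult_1_l. f_equal. ring.
Qed.

Lemma RInt_jackson_kernel_symmetric r :
  RInt (jackson_kernel r) (- PI) PI = 2 * RInt (jackson_kernel r) 0 PI :> R.
Proof.
  rewrite RInt_symmetric by apply continuous_jackson_kernel.
  rewrite <- RInt_scal_R by (apply ex_RInt_continuous_R, continuous_jackson_kernel).
  apply RInt_ext_R. intros. rewrite jackson_kernel_even. ring.
Qed.

Lemma RInt_jackson_kernel_pos r : 0 < RInt (jackson_kernel r) 0 PI.
Proof.
  pose proof (RInt_jackson_kernel_ge r). pose proof (pos_INR r).
  assert (0 < (INR r + 1) ^ 3) by (apply pow_lt; lra). lra.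
Qed.

Definition jackson_mean (r : nat) (g : R -> R) (th : R) : R :=
  RInt (fun t => g (th + t) * jackson_kernel r t) (- PI) PI
  / RInt (jackson_kernel r) (- PI) PI.

Section JacksonMean.
Variable g : R -> R.
Hypothesis g_continuous : forall t, continuous g t.

Let continuous_shift_mul_kernel r th t :
  continuous (fun t => g (th + t) * jackson_kernel r t) t.
Proof.
  apply continuous_mult_R; [| apply continuous_jackson_kernel].
  apply (continuous_ext (fun t => g (1 * t + th))); [intros; f_equal; ring |].
  apply continuous_comp_affine, g_continuous.
Qed.

Lemma jackson_mean_sub r th :
  g th - jackson_mean r g th =
  RInt (fun t => (2 * g th - g (th + t) - g (th - t)) * jackson_kernel r t) 0 PI
  / (2 * RInt (jackson_kernel r) 0 PI).
Proof.
  pose proof (RInt_jackson_kernel_pos r).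
  unfold jackson_mean. rewrite RInt_jackson_kernel_symmetric.
  rewrite RInt_symmetric by apply continuous_shift_mul_kernel.
  rewrite (RInt_ext_R (fun t => (2 * g th - g (th + t) - g (th - t)) * jackson_kernel r t)
    (fun t => 2 * g th * jackson_kernel r t
              - (g (th + t) * jackson_kernel r t + g (th + - t) * jackson_kernel r (- t))))
    by (intros; rewrite jackson_kernel_even; unfold Rminus; ring).
  assert (Hsym : forall t, continuous (fun t =>
            g (th + t) * jackson_kernel r t + g (th + - t) * jackson_kernel r (- t)) t).
  { intros. apply continuous_plus_R; [apply continuous_shift_mul_kernel |].
    apply (continuous_comp_opp (fun t => g (th + t) * jackson_kernel r t)).
    apply continuous_shift_mul_kernel. }
  rewrite RInt_minus_R, RInt_scal_R; try apply ex_RInt_continuous_R; auto.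
  - field. lra.
  - apply continuous_jackson_kernel.
  - intros. apply continuous_mult_R; [apply continuous_const | apply continuous_jackson_kernel].
Qed.

Hypothesis g_even : forall t, g (- t) = g t.
Hypothesis g_periodic : forall t, g (t + 2 * PI) = g t.

Lemma RInt_even_mul_sin k a : RInt (fun s => g s * sin (INR k * s)) (- a) a = 0.
Proof.
  rewrite RInt_symmetric.
  - rewrite (RInt_ext_R _ (fun _ => 0)), RInt_const; [apply Rmult_0_r |].
    intros s _. rewrite g_even. replace (INR k * - s) with (- (INR k * s)) by ring.
    rewrite sin_neg. ring.
  - intros. apply continuous_mult_R; [apply g_continuous |].
    apply continuous_of_ex_derive. auto_derive. auto.
Qed.

(* After the periodic shift s = th + t, expand K (s - th) by the subtraction formula. *)
Lemma in_span_jackson_mean r : in_span cos_mode (4 * r) (jackson_mean r g).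
Proof.
  destruct (in_span_jackson_kernel r) as [c Hc].
  set (I0 := RInt (jackson_kernel r) (- PI) PI).
  exists (fun k => c k * RInt (fun s => g s * cos (INR k * s)) (- PI) PI / I0).
  intros th. unfold jackson_mean. fold I0.
  assert (Hcs : forall k s, continuous (fun s => g s * cos (INR k * s)) s)
    by (intros; apply continuous_mult_R; [apply g_continuous |
        apply continuous_of_ex_derive; auto_derive; auto]).
  assert (Hsn : forall k s, continuous (fun s => g s * sin (INR k * s)) s)
    by (intros; apply continuous_mult_R; [apply g_continuous |
        apply continuous_of_ex_derive; auto_derive; auto]).
  rewrite (RInt_ext_R _ (fun t => g (th + t) * jackson_kernel r (th + t - th)))
    by (intros; do 2 f_equal; ring).
  rewrite (RInt_shift_periodic (fun s => g s * jackson_kernel r (s - th)) th).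
  - rewrite (RInt_ext_R _ (fun s => sum_f_R0 (fun k =>
        c k * cos (INR k * th) * (g s * cos (INR k * s))
        + c k * sin (INR k * th) * (g s * sin (INR k * s))) (4 * r))).
    2: { intros s _. rewrite Hc, scal_sum. apply sum_eq. intros k _. unfold cos_mode.
         replace (INR k * (s - th)) with (INR k * s - INR k * th) by ring.
         rewrite cos_minus. ring. }
    rewrite RInt_sum_R by (intros; apply continuous_plus_R;
      apply continuous_mult_R; auto using continuous_const).
    unfold Rdiv. rewrite Rmult_comm, scal_sum. apply sum_eq. intros k _.
    rewrite RInt_plus_R, !RInt_scal_R, RInt_even_mul_sin by
      (apply ex_RInt_continuous_R; intros; auto;
       apply continuous_mult_R; auto using continuous_const).
    unfold cos_mode. ring.
  - intros. apply continuous_mult_R; auto.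
    apply (continuous_ext (fun s => jackson_kernel r (1 * s + - th)));
      [intros; f_equal; ring |].
    apply continuous_comp_affine, continuous_jackson_kernel.
  - intros s. replace (s + 2 * PI - th) with ((s - th) + 2 * PI) by ring.
    rewrite g_periodic, jackson_kernel_periodic. reflexivity.
Qed.

Let continuous_second_difference_mul_kernel r th t :
  continuous (fun t => (2 * g th - g (th + t) - g (th - t)) * jackson_kernel r t) t.
Proof.
  apply continuous_mult_R; [| apply continuous_jackson_kernel].
  apply (continuous_ext (fun t => 2 * g th - g (1 * t + th) - g (-1 * t + th)));
    [intros; replace (1 * x + th) with (th + x) by ring;
     replace (-1 * x + th) with (th - x) by ring; reflexivity |].
  apply (continuous_minus (fun t => 2 * g th - g (1 * t + th)));
    [apply (continuous_minus (fun _ => 2 * g th)); [apply continuous_const |] |];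
    apply continuous_comp_affine, g_continuous.
Qed.

(* Pointwise, t^beta <= m^-beta (1 + m^2 t^2) with m = r + 1. *)
Lemma RInt_second_difference_mul_kernel_le r A beta th :
  0 < beta < 2 -> 0 <= A ->
  (forall t, 0 < t <= PI -> Rabs (g (th + t) + g (th - t) - 2 * g th) <= A * Rpower t beta) ->
  Rabs (RInt (fun t => (2 * g th - g (th + t) - g (th - t)) * jackson_kernel r t) 0 PI)
  <= A * Rpower (INR r + 1) (- beta) * (RInt (jackson_kernel r) 0 PI
       + (INR r + 1) ^ 2 * RInt (fun t => t ^ 2 * jackson_kernel r t) 0 PI).
Proof.
  intros Hb HA Hd2. pose proof PI2_3_2.
  set (m := INR r + 1). assert (Hm : 1 <= m) by (pose proof (pos_INR r); unfold m; lra).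
  set (w := Rpower m (- beta)). assert (Hw : 0 < w) by apply Rpower_pos.
  assert (HK : forall t, continuous (jackson_kernel r) t) by apply continuous_jackson_kernel.
  assert (Ht2K : forall t, continuous (fun t => t ^ 2 * jackson_kernel r t) t)
    by (intros; apply continuous_mult_R; auto; apply continuous_of_ex_derive; auto_derive; auto).
  assert (Hmaj : forall t, continuous
            (fun t => jackson_kernel r t + m ^ 2 * (t ^ 2 * jackson_kernel r t)) t)
    by (intros; apply continuous_plus_R; auto;
        apply continuous_mult_R; auto using continuous_const).
  eapply Rle_trans; [apply abs_RInt_le; [lra | apply ex_RInt_continuous_R; auto] |].
  eapply Rle_trans; [apply RInt_le with
    (g := fun t => A * w * (jackson_kernel r t + m ^ 2 * (t ^ 2 * jackson_kernel r t))) |].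
  - lra.
  - apply ex_RInt_continuous_R. intros.
    apply (continuous_comp _ Rabs); [auto | apply continuous_Rabs].
  - apply ex_RInt_continuous_R. intros. apply continuous_mult_R; auto using continuous_const.
  - intros t Ht. pose proof (jackson_kernel_ge0 r t).
    rewrite Rabs_mult, (Rabs_right (jackson_kernel r t)) by lra.
    replace (2 * g th - g (th + t) - g (th - t)) with (- (g (th + t) + g (th - t) - 2 * g th))
      by ring.
    rewrite Rabs_Ropp.
    pose proof (Rpower_le_scaled t m beta ltac:(lra) Hm Hb) as Hsplit. fold w in Hsplit.
    pose proof (Hd2 t ltac:(lra)).
    apply Rle_trans with (A * Rpower t beta * jackson_kernel r t); [nra |].
    replace (A * w * (jackson_kernel r t + m ^ 2 * (t ^ 2 * jackson_kernel r t)))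
      with (A * (w * (1 + (m * t) ^ 2)) * jackson_kernel r t) by ring.
    apply Rmult_le_compat_r; auto. apply Rmult_le_compat_l; auto.
  - rewrite RInt_scal_R, RInt_plus_R, RInt_scal_R; try apply ex_RInt_continuous_R; auto.
    + lra.
    + intros. apply continuous_mult_R; auto using continuous_const.
Qed.

(* The moments of the kernel: J = int_0^PI K >= m^3/2 and int_0^PI t^2 K <= 4200 m. *)
Lemma jackson_mean_error_le r A beta :
  0 < beta < 2 -> 0 <= A ->
  (forall th t, 0 < t <= PI -> Rabs (g (th + t) + g (th - t) - 2 * g th) <= A * Rpower t beta) ->
  forall th, Rabs (g th - jackson_mean r g th) <= 4201 * A * Rpower (INR r + 1) (- beta).
Proof.
  intros Hb HA Hd2 th.
  pose proof (RInt_second_difference_mul_kernel_le r A beta th Hb HA (Hd2 th)) as Hint.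
  set (m := INR r + 1) in *. assert (Hm : 1 <= m) by (pose proof (pos_INR r); unfold m; lra).
  set (J := RInt (jackson_kernel r) 0 PI) in *.
  set (w := Rpower m (- beta)) in *. assert (Hw : 0 < w) by apply Rpower_pos.
  assert (HJ : m ^ 3 / 2 <= J) by apply RInt_jackson_kernel_ge.
  assert (HJpos : 0 < J) by apply RInt_jackson_kernel_pos.
  assert (HM2 := RInt_sqr_mul_jackson_kernel_le r). fold m in HM2.
  assert (m ^ 2 * RInt (fun t => t ^ 2 * jackson_kernel r t) 0 PI <= 8400 * J)
    by (apply Rle_trans with (m ^ 2 * (4200 * m)); [apply Rmult_le_compat_l; nra | nra]).
  rewrite jackson_mean_sub. fold J.
  unfold Rdiv. rewrite Rabs_mult, Rabs_inv, (Rabs_right (2 * J)) by lra.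
  apply Rmult_le_reg_r with (2 * J); [lra |].
  rewrite Rmult_assoc, Rinv_l, Rmult_1_r by lra.
  assert (0 <= A * w * J) by (apply Rmult_le_pos; [apply Rmult_le_pos |]; lra).
  apply Rle_trans with (A * w * (J + 8400 * J)); [| nra].
  apply Rle_trans with (1 := Hint). apply Rmult_le_compat_l; nra.
Qed.

End JacksonMean.

Lemma locally_R_intro x (P : R -> Prop) d :
  0 < d -> (forall y, Rabs (y - x) < d -> P y) -> locally x P.
Proof. intros Hd HP. exists (mkposreal d Hd). exact HP. Qed.

Lemma mean_value_open (F dF : R -> R) a b : a < b ->
  (forall x, a <= x <= b -> continuity_pt F x) ->
  (forall x, a < x < b -> is_derive F x (dF x)) ->
  exists c, a < c < b /\ F b - F a = dF c * (b - a).
Proof.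
  intros Hab Hc Hd.
  assert (prF : forall c, a < c < b -> derivable_pt F c)
    by (intros c Pc; exists (dF c); apply is_derive_Reals, Hd, Pc).
  assert (prid : forall c, a < c < b -> derivable_pt id c)
    by (intros; apply derivable_pt_id).
  destruct (MVT id F a b prid prF Hab) as [c [Pc E]]; auto.
  - intros; apply derivable_continuous_pt, derivable_pt_id.
  - exists c. split; auto.
    rewrite (derive_pt_eq_0 id c 1 (prid c Pc) (derivable_pt_lim_id c)) in E.
    rewrite (derive_pt_eq_0 F c (dF c) (prF c Pc) (proj1 (is_derive_Reals _ _ _) (Hd c Pc))) in E.
    unfold id in E. lra.
Qed.

(* Apply the mean value theorem to h - f and h + f. *)
Lemma Rabs_sub_le_of_derive (f h df dh : R -> R) a b : a <= b ->
  (forall x, a <= x <= b -> continuity_pt f x) ->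
  (forall x, a <= x <= b -> continuity_pt h x) ->
  (forall x, a < x < b -> is_derive f x (df x)) ->
  (forall x, a < x < b -> is_derive h x (dh x)) ->
  (forall x, a < x < b -> Rabs (df x) <= dh x) ->
  Rabs (f b - f a) <= h b - h a.
Proof.
  intros Hab Cf Ch Df Dh Hb. destruct (Req_dec a b) as [<- | Hne].
  { rewrite !Rminus_eq_0, Rabs_R0. lra. }
  destruct (mean_value_open (fun x => h x - f x) (fun x => dh x - df x) a b)
    as [c1 [Hc1 E1]]; [lra | intros; apply continuity_pt_minus; auto |
                       intros; apply (is_derive_minus h f); auto |].
  destruct (mean_value_open (fun x => h x + f x) (fun x => dh x + df x) a b)
    as [c2 [Hc2 E2]]; [lra | intros; apply continuity_pt_plus; auto |
                       intros; apply (is_derive_plus h f); auto |].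
  pose proof (proj1 (Rabs_le_between _ _) (Hb c1 Hc1)).
  pose proof (proj1 (Rabs_le_between _ _) (Hb c2 Hc2)).
  assert (0 <= (dh c2 + df c2) * (b - a)) by (apply Rmult_le_pos; lra).
  assert (0 <= (dh c1 - df c1) * (b - a)) by (apply Rmult_le_pos; lra).
  apply Rabs_le. lra.
Qed.

Lemma is_derive_Rpower_one_minus e x : x < 1 ->
  is_derive (fun s => Rpower (1 - s) e) x (- (e * Rpower (1 - x) (e - 1))).
Proof.
  intros Hx.
  replace (- (e * Rpower (1 - x) (e - 1))) with (scal (-1) (e * Rpower (1 - x) (e - 1)))
    by (unfold scal; simpl; unfold mult; simpl; ring).
  apply (is_derive_comp (fun y => Rpower y e) (fun s => 1 - s)).
  - apply is_derive_Reals, derivable_pt_lim_power. lra.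
  - auto_derive; auto; ring.
Qed.

(* [Rpower 0 a = 1] (since [ln 0 = 0]), so [x ^ a] is extended by 0 to keep it continuous at 0. *)
Definition pos_power (a x : R) : R := if Rlt_dec 0 x then Rpower x a else 0.

Lemma pos_power_one_minus_near a s : s < 1 ->
  locally s (fun y => pos_power a (1 - y) = Rpower (1 - y) a).
Proof.
  intros Hs. apply (locally_R_intro _ _ (1 - s)); [lra |].
  intros y Hy. apply Rabs_lt_between in Hy. unfold pos_power.
  destruct (Rlt_dec 0 (1 - y)); [reflexivity | lra].
Qed.

Lemma continuity_pos_power_0 a : 0 < a -> continuity_pt (pos_power a) 0.
Proof.
  intros Ha. apply continuity_pt_filterlim, filterlim_locally. intros eps.
  apply locally_R_intro with (Rpower eps (/ a)); [apply Rpower_pos |].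
  intros y Hy. change (Rabs (pos_power a y - pos_power a 0) < eps).
  unfold pos_power. destruct (Rlt_dec 0 0); [lra |]. rewrite Rminus_0_r.
  destruct (Rlt_dec 0 y).
  - rewrite Rabs_right by (left; apply Rpower_pos).
    rewrite Rminus_0_r, Rabs_right in Hy by lra.
    apply Rlt_le_trans with (Rpower (Rpower eps (/ a)) a); [apply Rlt_Rpower_l; auto |].
    rewrite Rpower_mult, Rinv_l, Rpower_1 by (try lra; apply cond_pos). lra.
  - rewrite Rabs_R0. apply cond_pos.
Qed.

Lemma continuity_pos_power_one_minus a s : 0 < a -> s <= 1 ->
  continuity_pt (fun s => pos_power a (1 - s)) s.
Proof.
  intros Ha Hs. destruct (Req_dec s 1) as [-> | Hne].
  - apply (continuity_pt_comp (fun s => 1 - s) (pos_power a)).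
    + apply continuity_pt_minus; [apply continuity_pt_const; intros ??; auto |
                                  apply continuity_pt_id].
    + rewrite Rminus_eq_0. apply continuity_pos_power_0; auto.
  - apply continuity_pt_of_ex_derive.
    exists (- (a * Rpower (1 - s) (a - 1))).
    apply (is_derive_ext_loc (fun s => Rpower (1 - s) a)).
    + apply (filter_imp (fun y => pos_power a (1 - y) = Rpower (1 - y) a));
        [intros y Hy; auto | apply pos_power_one_minus_near; lra].
    + apply is_derive_Rpower_one_minus; lra.
Qed.

(* Compare with the majorant [-(K/a) (1 - s)^a], then use subadditivity of [x ^ a]. *)
Lemma holder_of_derive_le (H H1 : R -> R) a K : 0 < a < 1 -> 0 <= K ->
  (forall y, continuous H y) ->
  (forall y, -1 < y < 1 -> is_derive H y (H1 y)) ->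
  (forall y, -1 < y < 1 -> Rabs (H1 y) <= K * Rpower (1 - y) (a - 1)) ->
  forall x y, -1 <= x -> x < y -> y <= 1 -> Rabs (H y - H x) <= K / a * Rpower (y - x) a.
Proof.
  intros Ha HK Hc HD HB x y Hx Hxy Hy.
  eapply Rle_trans; [apply (Rabs_sub_le_of_derive H (fun s => - (K / a) * pos_power a (1 - s))
                      H1 (fun s => K * Rpower (1 - s) (a - 1)) x y) |].
  - lra.
  - intros; apply continuity_pt_filterlim, Hc.
  - intros s Hs. apply continuity_pt_scal, continuity_pos_power_one_minus; lra.
  - intros s Hs. apply HD; lra.
  - intros s Hs. apply (is_derive_ext_loc (fun s => - (K / a) * Rpower (1 - s) a)).
    + apply (filter_imp (fun z => pos_power a (1 - z) = Rpower (1 - z) a));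
        [intros z Hz; rewrite Hz; reflexivity | apply pos_power_one_minus_near; lra].
    + replace (K * Rpower (1 - s) (a - 1))
        with (- (K / a) * (- (a * Rpower (1 - s) (a - 1)))) by (field; lra).
      apply (is_derive_scal (fun s => Rpower (1 - s) a)), is_derive_Rpower_one_minus; lra.
  - intros s Hs; apply HB; lra.
  - assert (0 <= K / a) by (apply Rdiv_le_0_compat; lra).
    unfold pos_power. destruct (Rlt_dec 0 (1 - x)); [| lra].
    destruct (Rlt_dec 0 (1 - y)).
    + assert (Rpower (1 - x) a <= Rpower (1 - y) a + Rpower (y - x) a)
        by (replace (1 - x) with ((1 - y) + (y - x)) by ring; apply Rpower_add_le; lra).
      nra.
    + replace (y - x) with (1 - x) by lra. lra.
Qed.

Lemma holder_abs (H : R -> R) K a :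
  (forall x y, -1 <= x -> x < y -> y <= 1 -> Rabs (H y - H x) <= K * Rpower (y - x) a) ->
  forall x y, -1 <= x <= 1 -> -1 <= y <= 1 -> x <> y ->
  Rabs (H x - H y) <= K * Rpower (Rabs (x - y)) a.
Proof.
  intros Hh x y Hx Hy Hne. destruct (Rlt_dec x y).
  - rewrite Rabs_minus_sym, (Rabs_minus_sym x y), (Rabs_right (y - x)) by lra. apply Hh; lra.
  - rewrite (Rabs_right (x - y)) by lra. apply Hh; lra.
Qed.

Section SecondDerivative.
Variables H H1 H2 : R -> R.
Hypothesis H_continuous : forall y, continuous H y.
Hypothesis H_derive : forall y, -1 < y < 1 -> is_derive H y (H1 y).
Hypothesis H1_derive : forall y, -1 < y < 1 -> is_derive H1 y (H2 y).

Let continuity_H1 x : -1 < x < 1 -> continuity_pt H1 x.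
Proof.
  intros Hx. apply continuity_pt_of_ex_derive.
  exists (H2 x). apply H1_derive, Hx.
Qed.

(* Two nested mean value inequalities, with majorants [B s^2] and [B s]. *)
Lemma second_difference_le u v B : 0 < v -> -1 <= u - v -> u + v < 1 ->
  (forall s, u - v < s < u + v -> Rabs (H2 s) <= B) ->
  Rabs (H (u + v) + H (u - v) - 2 * H u) <= B * v ^ 2.
Proof.
  intros Hv Hl Hr HB.
  replace (B * v ^ 2) with (B * v ^ 2 - B * 0 ^ 2) by ring.
  replace (H (u + v) + H (u - v) - 2 * H u) with
    (H (u + v) + H (u - v) - 2 * H u - (H (u + 0) + H (u - 0) - 2 * H u))
    by (rewrite Rplus_0_r, Rminus_0_r; ring).
  apply (Rabs_sub_le_of_derive (fun s => H (u + s) + H (u - s) - 2 * H u) (fun s => B * s ^ 2)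
           (fun s => H1 (u + s) - H1 (u - s)) (fun s => 2 * B * s)); [lra | | | | |].
  - intros s Hs. apply continuity_pt_filterlim.
    apply (continuous_minus (fun s => H (u + s) + H (u - s)) (fun _ => 2 * H u));
      [| apply continuous_const].
    apply continuous_plus_R.
    + apply (continuous_ext (fun s => H (1 * s + u))); [intros; f_equal; ring |].
      apply continuous_comp_affine, H_continuous.
    + apply (continuous_ext (fun s => H (-1 * s + u))); [intros; f_equal; ring |].
      apply continuous_comp_affine, H_continuous.
  - intros. apply continuity_pt_of_ex_derive. auto_derive. auto.
  - intros s Hs.
    replace (H1 (u + s) - H1 (u - s)) with
      (minus (plus (scal 1 (H1 (u + s))) (scal (-1) (H1 (u - s)))) (@zero R_AbsRing))
      by (unfold minus, plus, scal, opp, zero; simpl; unfold mult; simpl; ring).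
    apply (is_derive_minus (fun s => H (u + s) + H (u - s)) (fun _ => 2 * H u));
      [| auto_derive; auto].
    apply (is_derive_plus (fun s => H (u + s)) (fun s => H (u - s))).
    + apply (is_derive_comp H (fun s => u + s)); [apply H_derive; lra | auto_derive; auto; ring].
    + apply (is_derive_comp H (fun s => u - s)); [apply H_derive; lra | auto_derive; auto; ring].
  - intros s Hs. auto_derive; auto; ring.
  - intros s Hs. replace (2 * B * s) with (B * (u + s) - B * (u - s)) by ring.
    apply (Rabs_sub_le_of_derive H1 (fun x => B * x) H2 (fun _ => B)); [lra | | | | |].
    + intros x Hx. apply continuity_H1. lra.
    + intros. apply continuity_pt_of_ex_derive. auto_derive. auto.
    + intros x Hx. apply H1_derive. lra.
    + intros x Hx. auto_derive; auto; ring.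
    + intros x Hx. apply HB. lra.
Qed.

Variables a M : R.
Hypothesis a_range : 0 < a < 1.
Hypothesis M_ge0 : 0 <= M.
Hypothesis H2_le : forall y, -1 < y < 1 -> Rabs (H2 y) <= M * Rpower (1 - y) (a - 2).

Hypothesis H1_0 : H1 0 = 0.

(* Compare with [M/(1-a) (1-s)^(a-1)], a primitive of the bound on H2. *)
Lemma derive_le_of_second_derive_le_right y : 0 <= y < 1 ->
  Rabs (H1 y) <= M / (1 - a) * Rpower (1 - y) (a - 1).
Proof.
  intros Hy.
  assert (Hcmp : Rabs (H1 y - H1 0) <=
            M / (1 - a) * Rpower (1 - y) (a - 1) - M / (1 - a) * Rpower (1 - 0) (a - 1)).
  { apply (Rabs_sub_le_of_derive H1 (fun s => M / (1 - a) * Rpower (1 - s) (a - 1))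
             H2 (fun s => M * Rpower (1 - s) (a - 2))); [lra | | | | |].
    - intros x Hx. apply continuity_H1. lra.
    - intros x Hx. apply continuity_pt_of_ex_derive.
      exists (M / (1 - a) * (- ((a - 1) * Rpower (1 - x) (a - 1 - 1)))).
      apply (is_derive_scal (fun s => Rpower (1 - s) (a - 1))), is_derive_Rpower_one_minus.
      lra.
    - intros x Hx. apply H1_derive. lra.
    - intros x Hx.
      replace (M * Rpower (1 - x) (a - 2))
        with (M / (1 - a) * (- ((a - 1) * Rpower (1 - x) (a - 1 - 1))))
        by (replace (a - 1 - 1) with (a - 2) by ring; field; lra).
      apply (is_derive_scal (fun s => Rpower (1 - s) (a - 1))), is_derive_Rpower_one_minus.
      lra.
    - intros x Hx. apply H2_le. lra. }
  rewrite H1_0, Rminus_0_r, Rminus_0_r, Rpower_base_1 in Hcmp.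
  assert (0 <= M / (1 - a)) by (apply Rdiv_le_0_compat; lra).
  lra.
Qed.

(* Left of 0 the bound on H2 is at most M, and [(1-y)^(a-1) >= 2^(a-1) >= 1/2]. *)
Lemma derive_le_of_second_derive_le_left y : -1 < y < 0 ->
  Rabs (H1 y) <= 2 * M * Rpower (1 - y) (a - 1).
Proof.
  intros Hy.
  assert (Hcmp : Rabs (H1 0 - H1 y) <= M * 0 - M * y).
  { apply (Rabs_sub_le_of_derive H1 (fun s => M * s) H2 (fun _ => M)); [lra | | | | |].
    - intros x Hx. apply continuity_H1. lra.
    - intros. apply continuity_pt_of_ex_derive. auto_derive. auto.
    - intros x Hx. apply H1_derive. lra.
    - intros x Hx. auto_derive; auto; ring.
    - intros x Hx. eapply Rle_trans; [apply H2_le; lra |].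
      assert (Rpower (1 - x) (a - 2) <= Rpower 1 (a - 2))
        by (apply Rpower_le_l_nonpos; lra).
      rewrite Rpower_base_1 in *. nra. }
  rewrite H1_0, Rminus_0_l, Rabs_Ropp in Hcmp.
  assert (1 / 2 <= Rpower (1 - y) (a - 1)).
  { assert (Rpower 2 (a - 1) <= Rpower (1 - y) (a - 1)) by (apply Rpower_le_l_nonpos; lra).
    assert (Hinv : Rpower 2 (Ropp 1) <= Rpower 2 (a - 1)) by (apply Rle_Rpower; lra).
    rewrite Rpower_Ropp, Rpower_1 in Hinv by lra. lra. }
  nra.
Qed.

Lemma derive_le_of_second_derive_le y : -1 < y < 1 ->
  Rabs (H1 y) <= M * (2 + / (1 - a)) * Rpower (1 - y) (a - 1).
Proof.
  intros Hy. pose proof (Rpower_pos (1 - y) (a - 1)).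
  assert (0 < / (1 - a)) by (apply Rinv_0_lt_compat; lra).
  destruct (Rle_dec 0 y).
  - eapply Rle_trans; [apply derive_le_of_second_derive_le_right; lra |].
    apply Rmult_le_compat_r; [lra |]. unfold Rdiv. nra.
  - eapply Rle_trans; [apply derive_le_of_second_derive_le_left; lra |].
    apply Rmult_le_compat_r; [lra |]. nra.
Qed.

End SecondDerivative.

Lemma sin_mul_sin_sqr_le th t : (sin th * sin t) ^ 2 <= 2 * (1 - cos th * cos t) * t ^ 2.
Proof.
  pose proof (COS_bound th). pose proof (COS_bound t).
  assert (Hsin2 : sin th ^ 2 <= 2 * (1 - cos th * cos t)).
  { pose proof (sin2_cos2 th). unfold Rsqr in *.
    destruct (Rle_dec 0 (cos th)); nra. }
  assert (sin t ^ 2 <= t ^ 2).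
  { rewrite <- (pow2_abs (sin t)), <- (pow2_abs t).
    pose proof (Rabs_sin_le t). pose proof (Rabs_pos (sin t)). nra. }
  rewrite Rpow_mult_distr. pose proof (pow2_ge_0 (sin th)). pose proof (pow2_ge_0 (sin t)). nra.
Qed.

Lemma Rabs_cos_mul_cos_sub_le th t : Rabs (cos th * cos t - cos th) <= t ^ 2.
Proof.
  replace (cos th * cos t - cos th) with (cos th * (cos t - 1)) by ring.
  pose proof (cos_ge_1_minus_sqr_half t). pose proof (COS_bound t).
  assert (Rabs (cos th) <= 1) by apply Rabs_le, COS_bound.
  rewrite Rabs_mult, (Rabs_left1 (cos t - 1)) by lra. pose proof (Rabs_pos (cos th)).
  pose proof (pow2_ge_0 t). nra.
Qed.

Section SecondDifferenceCos.
Variables (H H1 H2 : R -> R) (a M K : R).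
Hypothesis H_continuous : forall y, continuous H y.
Hypothesis H_derive : forall y, -1 < y < 1 -> is_derive H y (H1 y).
Hypothesis H1_derive : forall y, -1 < y < 1 -> is_derive H1 y (H2 y).
Hypothesis a_range : 0 < a < 1.
Hypothesis M_ge0 : 0 <= M.
Hypothesis K_ge0 : 0 <= K.
Hypothesis H2_le : forall y, -1 < y < 1 -> Rabs (H2 y) <= M * Rpower (1 - y) (a - 2).
Hypothesis H_holder :
  forall x y, -1 <= x -> x < y -> y <= 1 -> Rabs (H y - H x) <= K * Rpower (y - x) a.

(* On [u - v, u + v] the second derivative is at most [M q^(a-2)] with [q = (1 - u)/2], and
   [v^2 <= min (q^2, 4 q t^2)]. *)
Lemma second_difference_le_near u v t : 0 < t -> 0 < v -> 2 * v <= 1 - u -> -1 <= u - v ->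
  v ^ 2 <= 2 * (1 - u) * t ^ 2 ->
  Rabs (H (u + v) + H (u - v) - 2 * H u) <= 4 * M * Rpower (t ^ 2) a.
Proof.
  intros Ht Hv Hnear Hl Hvt.
  assert (Ht2 : 0 < t ^ 2) by nra.
  set (q := (1 - u) / 2). assert (Hq : 0 < q) by (unfold q; lra).
  eapply Rle_trans; [apply (second_difference_le H H1 H2 H_continuous H_derive H1_derive
                              u v (M * Rpower q (a - 2))); try (unfold q in *; lra) |].
  { intros s Hs. eapply Rle_trans; [apply H2_le; unfold q in *; lra |].
    apply Rmult_le_compat_l; auto. apply Rpower_le_l_nonpos; unfold q in *; lra. }
  assert (Eq2 : forall e, Rpower q (e - 2) * q ^ 2 = Rpower q e).
  { intros e. rewrite <- Rpower_pow, <- Rpower_plus by auto. f_equal. simpl. ring. }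
  assert (Eq1 : Rpower q (a - 2) * q = Rpower q (a - 1)).
  { rewrite <- (Rpower_1 q) at 2 by auto. rewrite <- Rpower_plus. f_equal. ring. }
  pose proof (Rpower_pos q (a - 2)). pose proof (Rpower_pos q (a - 1)).
  pose proof (Rpower_pos (t ^ 2) a).
  replace (4 * M * Rpower (t ^ 2) a) with (M * (4 * Rpower (t ^ 2) a)) by ring.
  rewrite Rmult_assoc. apply Rmult_le_compat_l; auto.
  destruct (Rle_dec q (t ^ 2)).
  - assert (v ^ 2 <= q ^ 2) by (unfold q in *; nra).
    assert (Rpower q a <= Rpower (t ^ 2) a) by (apply Rle_Rpower_l; lra).
    apply Rle_trans with (Rpower q (a - 2) * q ^ 2); [apply Rmult_le_compat_l; lra |].
    rewrite Eq2. lra.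
  - assert (v ^ 2 <= 4 * q * t ^ 2) by (unfold q; lra).
    assert (Rpower q (a - 1) <= Rpower (t ^ 2) (a - 1)) by (apply Rpower_le_l_nonpos; lra).
    assert (Eqt : Rpower (t ^ 2) (a - 1) * t ^ 2 = Rpower (t ^ 2) a).
    { rewrite <- (Rpower_1 (t ^ 2)) at 2 by auto. rewrite <- Rpower_plus. f_equal. ring. }
    apply Rle_trans with (Rpower q (a - 2) * (4 * q * t ^ 2)); [apply Rmult_le_compat_l; lra |].
    replace (Rpower q (a - 2) * (4 * q * t ^ 2)) with (4 * (Rpower q (a - 2) * q * t ^ 2))
      by ring.
    rewrite Eq1, <- Eqt. nra.
Qed.

(* Here [v < 4 t^2], and the Holder bound is applied to both first differences. *)
Lemma second_difference_le_far u v t : 0 <= v -> 1 - u < 2 * v ->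
  -1 <= u - v -> u + v <= 1 -> v ^ 2 <= 2 * (1 - u) * t ^ 2 ->
  Rabs (H (u + v) + H (u - v) - 2 * H u) <= 8 * K * Rpower (t ^ 2) a.
Proof.
  intros Hv Hfar Hl Hr Hvt.
  assert (Hv4 : v < 4 * t ^ 2) by nra.
  assert (Hpow : Rpower v a <= 4 * Rpower (t ^ 2) a).
  { apply Rle_trans with (Rpower (4 * t ^ 2) a); [apply Rle_Rpower_l; lra |].
    rewrite <- Rpower_mult_distr by nra. apply Rmult_le_compat_r; [left; apply Rpower_pos |].
    rewrite <- (Rpower_1 4) at 2 by lra. apply Rle_Rpower; lra. }
  assert (Rabs (H (u + v) - H u) <= K * Rpower v a)
    by (replace v with (u + v - u) at 2 by ring; apply H_holder; lra).
  assert (Rabs (H (u - v) - H u) <= K * Rpower v a).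
  { rewrite Rabs_minus_sym. replace v with (u - (u - v)) at 2 by ring. apply H_holder; lra. }
  replace (H (u + v) + H (u - v) - 2 * H u) with ((H (u + v) - H u) + (H (u - v) - H u))
    by ring.
  eapply Rle_trans; [apply Rabs_triang | nra].
Qed.

Lemma second_difference_le_sqr u v t : 0 < t -> 0 <= v -> -1 <= u - v -> u + v <= 1 ->
  v ^ 2 <= 2 * (1 - u) * t ^ 2 ->
  Rabs (H (u + v) + H (u - v) - 2 * H u) <= (4 * M + 8 * K) * Rpower t (2 * a).
Proof.
  intros Ht Hv Hl Hr Hvt.
  rewrite <- Rpower_pow2 by lra. pose proof (Rpower_pos (t ^ 2) a).
  destruct Hv as [Hv | <-].
  2: { rewrite Rplus_0_r, Rminus_0_r.
       replace (H u + H u - 2 * H u) with 0 by ring. rewrite Rabs_R0.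
       apply Rmult_le_pos; lra. }
  destruct (Rle_dec (2 * v) (1 - u)).
  - eapply Rle_trans; [apply (second_difference_le_near u v t); lra |]. nra.
  - eapply Rle_trans; [apply (second_difference_le_far u v t); lra |]. nra.
Qed.

(* Write cos (th -+ t) = u +- v with u = cos th cos t, v = |sin th sin t|, and compare
   H u with H (cos th) by the Holder bound. *)
Lemma second_difference_cos_le th t : 0 < t ->
  Rabs (H (cos (th + t)) + H (cos (th - t)) - 2 * H (cos th))
  <= (4 * M + 10 * K) * Rpower t (2 * a).
Proof.
  intros Ht.
  set (u := cos th * cos t). set (w := sin th * sin t). set (v := Rabs w).
  pose proof (COS_bound (th + t)) as Hp. pose proof (COS_bound (th - t)) as Hm.
  rewrite cos_plus in Hp |- *. rewrite cos_minus in Hm |- *. fold u w in Hp, Hm |- *.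
  assert (Hsum : H (u - w) + H (u + w) = H (u + v) + H (u - v) /\
                 -1 <= u - v /\ u + v <= 1).
  { unfold v. destruct (Rle_dec 0 w); [rewrite Rabs_right by lra | rewrite Rabs_left by lra];
      (split; [unfold Rminus; rewrite ?Ropp_involutive; ring | lra]). }
  destruct Hsum as [-> Huv].
  assert (Hvt : v ^ 2 <= 2 * (1 - u) * t ^ 2)
    by (unfold v; rewrite pow2_abs; apply sin_mul_sin_sqr_le).
  assert (Hshift : Rabs (H u - H (cos th)) <= K * Rpower t (2 * a)).
  { destruct (Req_dec u (cos th)) as [Heq | Hne].
    { rewrite Heq, Rminus_eq_0, Rabs_R0. pose proof (Rpower_pos t (2 * a)). nra. }
    pose proof (COS_bound th). pose proof (COS_bound t).
    eapply Rle_trans; [apply (holder_abs H K a H_holder); auto; unfold u; split; nra |].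
    rewrite <- Rpower_pow2 by lra. apply Rmult_le_compat_l; auto.
    apply Rle_Rpower_l; [lra | split; [apply Rabs_pos_lt; lra |]].
    apply Rabs_cos_mul_cos_sub_le. }
  pose proof (second_difference_le_sqr u v t Ht (Rabs_pos w) ltac:(lra) ltac:(lra) Hvt).
  replace (H (u + v) + H (u - v) - 2 * H (cos th))
    with ((H (u + v) + H (u - v) - 2 * H u) + 2 * (H u - H (cos th))) by ring.
  eapply Rle_trans; [apply Rabs_triang |].
  rewrite Rabs_mult, (Rabs_right 2) by lra. lra.
Qed.

End SecondDifferenceCos.

Lemma E_L_le phi L lo hi (a : nat -> R) E : lo <= hi ->
  (forall x, lo <= x <= hi -> Rabs (phi x - poly_eval a L x) <= E) ->
  Rbar_le (E_L phi L lo hi) (Finite E).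
Proof.
  intros Hlh HE.
  destruct (Lub_Rbar_correct (fun y => exists x, lo <= x <= hi /\
              y = Rabs (phi x - poly_eval a L x))) as [Hub Hlub].
  assert (Hle : Rbar_le (sup_err phi a L lo hi) (Finite E))
    by (apply Hlub; intros y [x [Hx ->]]; apply HE, Hx).
  assert (Hge : Rbar_le (Finite (Rabs (phi lo - poly_eval a L lo))) (sup_err phi a L lo hi))
    by (apply Hub; exists lo; split; [lra | reflexivity]).
  destruct (sup_err phi a L lo hi) as [e | |] eqn:Ee; simpl in Hle, Hge; try contradiction.
  apply Rbar_le_trans with (Finite e); [| exact Hle].
  apply Glb_Rbar_correct. exists a. exact Ee.
Qed.

(* phi is only continuous within [0, 1]; [phi (clamp01 x)] is continuous on all of R. *)
Definition clamp01 (x : R) : R := (Rabs x - Rabs (x - 1) + 1) / 2.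

Lemma clamp01_range x : 0 <= clamp01 x <= 1.
Proof. unfold clamp01, Rabs. destruct (Rcase_abs x), (Rcase_abs (x - 1)); lra. Qed.

Lemma clamp01_id x : 0 <= x <= 1 -> clamp01 x = x.
Proof. intros. unfold clamp01. rewrite Rabs_right, Rabs_left1 by lra. field. Qed.

Lemma continuous_clamp01 x : continuous clamp01 x.
Proof.
  apply (continuous_mult (fun x => Rabs x - Rabs (x - 1) + 1) (fun _ => / 2));
    [| apply continuous_const].
  apply continuous_plus_R; [| apply continuous_const].
  apply (continuous_minus Rabs (fun x => Rabs (x - 1))); [apply continuous_Rabs |].
  apply (continuous_comp (fun x => x - 1) Rabs); [| apply continuous_Rabs].
  apply continuous_of_ex_derive. auto_derive. auto.
Qed.

Lemma continuous_comp_clamp01 (phi : R -> R) :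
  (forall x, 0 <= x <= 1 ->
     filterlim phi (within (fun y => 0 <= y <= 1) (locally x)) (locally (phi x))) ->
  forall x, continuous (fun x => phi (clamp01 x)) x.
Proof.
  intros Hphi x.
  apply (filterlim_comp _ _ _ clamp01 phi _
           (within (fun y => 0 <= y <= 1) (locally (clamp01 x)))).
  - intros P HP. unfold filtermap.
    apply (filter_imp (fun z => 0 <= clamp01 z <= 1 -> P (clamp01 z)));
      [intros z Hz; apply Hz, clamp01_range |].
    exact (continuous_clamp01 x _ HP).
  - apply Hphi, clamp01_range.
Qed.

Lemma Rpower_scale_le a D l m : 0 < a < 1 -> 0 < D -> 1 <= l -> 1 <= m -> l <= 4 * m ->
  Rpower D a * Rpower m (- (2 * a)) <= 16 * Rpower (D / l ^ 2) a.
Proof.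
  intros Ha HD Hl Hm Hlm.
  unfold Rdiv. rewrite <- Rpower_mult_distr by (try apply Rinv_0_lt_compat; nra).
  replace (Rpower (/ l ^ 2) a) with (/ Rpower l (2 * a))
    by (rewrite <- Rpower_pow2, <- Rpower_Ropp by lra; unfold Rpower;
        rewrite ln_Rinv by nra; f_equal; ring).
  rewrite Rpower_Ropp.
  assert (Rpower l (2 * a) <= 16 * Rpower m (2 * a)).
  { apply Rle_trans with (Rpower (4 * m) (2 * a)); [apply Rle_Rpower_l; lra |].
    rewrite <- Rpower_mult_distr by lra. apply Rmult_le_compat_r; [left; apply Rpower_pos |].
    apply Rle_trans with (Rpower 4 (INR 2)); [apply Rle_Rpower; simpl; lra |].
    rewrite Rpower_pow by lra. lra. }
  pose proof (Rpower_pos l (2 * a)). pose proof (Rpower_pos m (2 * a)).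
  pose proof (Rpower_pos D a).
  assert (/ Rpower m (2 * a) <= 16 * / Rpower l (2 * a)).
  { apply Rmult_le_reg_r with (Rpower m (2 * a) * Rpower l (2 * a)); [nra |].
    field_simplify; lra. }
  nra.
Qed.

(* The substitution x = D (1 - y) / 2 maps [-1, 1] onto [0, D]; the linear term makes the
   derivative vanish at y = 0, i.e. at x = D / 2. *)
Definition rescaled (phi d1 : R -> R) (D y : R) : R :=
  phi (clamp01 (D * (1 - y) / 2)) + D / 2 * d1 (D / 2) * y.

(* [4 + 10 K] as in [second_difference_cos_le], for the Holder constant
   [K = (2 + 1/(1 - alpha)) / alpha] obtained from a unit bound on the second derivative. *)
Definition holder_factor (alpha : R) : R := 4 + 10 * (2 + / (1 - alpha)) / alpha.

Lemma holder_factor_pos alpha : 0 < alpha < 1 -> 0 < holder_factor alpha.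
Proof.
  intros Ha. unfold holder_factor.
  assert (0 < / (1 - alpha)) by (apply Rinv_0_lt_compat; lra).
  assert (0 < (2 + / (1 - alpha)) / alpha) by (apply Rdiv_lt_0_compat; lra). lra.
Qed.

Section Rescaled.
Variables (alpha A D : R) (phi d1 d2 : R -> R).
Hypothesis alpha_range : 0 < alpha < 1.
Hypothesis A_ge0 : 0 <= A.
Hypothesis D_range : 0 < D <= 1.
Hypothesis phi_continuous : forall x, 0 <= x <= 1 ->
  filterlim phi (within (fun y => 0 <= y <= 1) (locally x)) (locally (phi x)).
Hypothesis phi_derive : forall p, 0 < p < 1 -> is_derive phi p (d1 p).
Hypothesis d1_derive : forall p, 0 < p < 1 -> is_derive d1 p (d2 p).
Hypothesis d2_le : forall p, 0 < p < 1 -> Rabs (d2 p) <= A * Rpower p (alpha - 2).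

Let inner_range y : -1 < y < 1 -> 0 < D * (1 - y) / 2 < 1.
Proof. intros Hy. split; [apply Rmult_lt_0_compat |]; nra. Qed.

Let rescaled1 y := - (D / 2) * d1 (D * (1 - y) / 2) + D / 2 * d1 (D / 2).
Let rescaled2 y := D * D / 4 * d2 (D * (1 - y) / 2).

Let continuous_rescaled y : continuous (rescaled phi d1 D) y.
Proof.
  unfold rescaled. apply continuous_plus_R.
  - apply (continuous_ext (fun y => phi (clamp01 ((- D / 2) * y + D / 2))));
      [intros; do 2 f_equal; field |].
    apply (continuous_comp_affine (fun x => phi (clamp01 x))).
    apply continuous_comp_clamp01, phi_continuous.
  - apply continuous_of_ex_derive. auto_derive. auto.
Qed.

Let is_derive_rescaled y : -1 < y < 1 -> is_derive (rescaled phi d1 D) y (rescaled1 y).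
Proof.
  intros Hy. apply (is_derive_plus (fun y => phi (clamp01 (D * (1 - y) / 2)))
                     (fun y => D / 2 * d1 (D / 2) * y)); [| auto_derive; auto; ring].
  apply (is_derive_comp (fun x => phi (clamp01 x)) (fun y => D * (1 - y) / 2));
    [| auto_derive; auto; field].
  destruct (inner_range y Hy) as [Hx0 Hx1].
  apply (is_derive_ext_loc phi); [| apply phi_derive; lra].
  apply (locally_R_intro _ _ (Rmin (D * (1 - y) / 2) (1 - D * (1 - y) / 2)));
    [apply Rmin_glb_lt; lra |].
  intros z Hz. apply Rabs_lt_between in Hz.
  pose proof (Rmin_l (D * (1 - y) / 2) (1 - D * (1 - y) / 2)).
  pose proof (Rmin_r (D * (1 - y) / 2) (1 - D * (1 - y) / 2)).
  symmetry. apply f_equal, clamp01_id. lra.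
Qed.

Let is_derive_rescaled1 y : -1 < y < 1 -> is_derive rescaled1 y (rescaled2 y).
Proof.
  intros Hy. unfold rescaled1, rescaled2. set (x := D * (1 - y) / 2).
  rewrite <- (Rplus_0_r (D * D / 4 * d2 x)).
  apply (is_derive_plus (fun y => - (D / 2) * d1 (D * (1 - y) / 2))
           (fun _ => D / 2 * d1 (D / 2)) y (D * D / 4 * d2 x) 0); [| auto_derive; auto].
  replace (D * D / 4 * d2 x) with (- (D / 2) * (- (D / 2) * d2 x)) by field.
  apply (is_derive_scal (fun y => d1 (D * (1 - y) / 2))).
  apply (is_derive_comp d1 (fun y => D * (1 - y) / 2)); [apply d1_derive, inner_range, Hy |].
  auto_derive; auto. lra.
Qed.

Let rescaled2_le y : -1 < y < 1 ->
  Rabs (rescaled2 y) <= A * Rpower D alpha * Rpower (1 - y) (alpha - 2).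
Proof.
  intros Hy. unfold rescaled2. rewrite Rabs_mult, Rabs_right by (apply Rle_ge; nra).
  eapply Rle_trans; [apply Rmult_le_compat_l; [nra | apply d2_le, inner_range, Hy] |].
  replace (D * (1 - y) / 2) with (D / 2 * (1 - y)) by field.
  rewrite <- Rpower_mult_distr by lra.
  assert (E : D * D / 4 * Rpower (D / 2) (alpha - 2) = Rpower (D / 2) alpha).
  { replace (D * D / 4) with ((D / 2) ^ 2) by field.
    rewrite <- Rpower_pow, <- Rpower_plus by lra. f_equal. simpl. ring. }
  assert (Rpower (D / 2) alpha <= Rpower D alpha) by (apply Rle_Rpower_l; lra).
  pose proof (Rpower_pos (1 - y) (alpha - 2)).
  replace (D * D / 4 * (A * (Rpower (D / 2) (alpha - 2) * Rpower (1 - y) (alpha - 2))))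
    with (A * (D * D / 4 * Rpower (D / 2) (alpha - 2)) * Rpower (1 - y) (alpha - 2)) by ring.
  rewrite E. apply Rmult_le_compat_r; [lra |]. apply Rmult_le_compat_l; lra.
Qed.

Lemma rescaled_second_difference_cos_le th t : 0 < t ->
  Rabs (rescaled phi d1 D (cos (th + t)) + rescaled phi d1 D (cos (th - t))
        - 2 * rescaled phi d1 D (cos th))
  <= A * Rpower D alpha * holder_factor alpha * Rpower t (2 * alpha).
Proof.
  intros Ht. set (M := A * Rpower D alpha).
  assert (HM : 0 <= M) by (unfold M; pose proof (Rpower_pos D alpha); nra).
  set (K := M * (2 + / (1 - alpha))).
  assert (HK : 0 <= K / alpha).
  { assert (0 < / (1 - alpha)) by (apply Rinv_0_lt_compat; lra).
    apply Rdiv_le_0_compat; unfold K; nra. }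
  assert (Hd1 : forall y, -1 < y < 1 -> Rabs (rescaled1 y) <= K * Rpower (1 - y) (alpha - 1)).
  { apply (derive_le_of_second_derive_le rescaled1 rescaled2 is_derive_rescaled1 alpha M);
      auto.
    unfold rescaled1. replace (D * (1 - 0) / 2) with (D / 2) by field. ring. }
  eapply Rle_trans; [apply (second_difference_cos_le (rescaled phi d1 D) rescaled1 rescaled2
                              alpha M (K / alpha)); auto |].
  - apply (holder_of_derive_le _ rescaled1); auto. unfold K.
    assert (0 < / (1 - alpha)) by (apply Rinv_0_lt_compat; lra). nra.
  - right. unfold holder_factor, K. field. lra.
Qed.

Lemma E_L_le_jackson L : (1 <= L)%nat ->
  Rbar_le (E_L phi L 0 D) (Finite (4201 * (A * Rpower D alpha * holder_factor alpha)
                                   * Rpower (INR (L / 4) + 1) (- (2 * alpha)))).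
Proof.
  intros HL. set (r := (L / 4)%nat). set (g := fun th => rescaled phi d1 D (cos th)).
  set (b := D / 2 * d1 (D / 2)).
  assert (Hg : forall t, continuous g t)
    by (intros; apply (continuous_comp cos); [apply continuous_cos | auto]).
  destruct (cos_poly_eq_poly_cos (4 * r) (jackson_mean r g)) as [Q [HQ EQ]].
  { apply in_span_jackson_mean; auto.
    - intros t. unfold g. rewrite cos_neg. reflexivity.
    - intros t. unfold g. rewrite <- (cos_period t 1). do 3 f_equal. simpl. ring. }
  destruct (in_span_add monomial L (fun x => Q (-2 / D * x + 1))
              (fun x => - b * (-2 / D * x + 1) ^ 1)) as [a Ha].
  { apply in_span_widen with (4 * r)%nat; [unfold r; pose proof (Nat.Div0.mul_div_le L 4); lia |].
    apply in_span_monomial_comp_affine, HQ. }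
  { apply in_span_scal, in_span_widen with 1%nat; auto.
    apply in_span_monomial_affine_pow. }
  apply E_L_le with a; [lra |]. intros x Hx.
  set (y := -2 / D * x + 1).
  assert (Hy : -1 <= y <= 1).
  { assert (0 <= x / D) by (apply Rdiv_le_0_compat; lra).
    assert (x / D <= 1) by (unfold Rdiv; rewrite <- (Rinv_r D) by lra;
      apply Rmult_le_compat_r; [left; apply Rinv_0_lt_compat |]; lra).
    replace y with (1 - 2 * (x / D)) by (unfold y; field; lra). lra. }
  assert (Hphi : phi x = g (acos y) - b * y).
  { unfold g, rescaled. rewrite cos_acos by auto. fold b.
    replace (D * (1 - y) / 2) with x by (unfold y; field; lra).
    rewrite clamp01_id by lra. ring. }
  assert (Hpoly : poly_eval a L x = jackson_mean r g (acos y) - b * y).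
  { unfold poly_eval. rewrite EQ, cos_acos by auto.
    specialize (Ha x). unfold monomial in Ha. rewrite <- Ha. fold y. ring. }
  rewrite Hphi, Hpoly. replace (g (acos y) - b * y - (jackson_mean r g (acos y) - b * y))
    with (g (acos y) - jackson_mean r g (acos y)) by ring.
  apply jackson_mean_error_le; auto.
  - lra.
  - pose proof (holder_factor_pos alpha alpha_range). pose proof (Rpower_pos D alpha).
    apply Rmult_le_pos; [apply Rmult_le_pos |]; lra.
  - intros th t Ht. apply rescaled_second_difference_cos_le. lra.
Qed.

End Rescaled.

Lemma INR_le_4_mul_div4_succ L : INR L <= 4 * (INR (L / 4) + 1).
Proof.
  assert (Hnat : (L <= 4 * (L / 4 + 1))%nat)
    by (pose proof (Nat.div_mod_eq L 4); pose proof (Nat.mod_upper_bound L 4 ltac:(lia)); lia).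
  apply le_INR in Hnat. rewrite mult_INR, plus_INR, INR_1 in Hnat.
  replace (INR 4) with 4 in Hnat by (simpl; ring). lra.
Qed.

Lemma Rpower_upper_bound_absorb B c e p : 0 <= B -> e <= 0 -> 0 < p <= 1 ->
  B * Rpower p e + c <= (B + Rabs c) * Rpower p e.
Proof.
  intros HB He Hp.
  assert (1 <= Rpower p e) by (rewrite <- (Rpower_base_1 e); apply Rpower_le_l_nonpos; lra).
  pose proof (Rle_abs c). pose proof (Rabs_pos c). nra.
Qed.

Theorem lemma8 (alpha : R) (phi d1 d2 : R -> R) (W c c' : R) :
  0 < alpha < 1 ->
  (* phi : [0,1] -> [0, oo), continuous on [0,1] *)
  (forall x, 0 <= x <= 1 -> 0 <= phi x) ->
  (forall x, 0 <= x <= 1 ->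
     filterlim phi (within (fun y => 0 <= y <= 1) (locally x)) (locally (phi x))) ->
  (* phi is C^2 on (0,1) with phi' = d1, phi'' = d2 *)
  (forall p, 0 < p < 1 -> is_derive phi p (d1 p)) ->
  (forall p, 0 < p < 1 -> is_derive d1 p (d2 p)) ->
  (forall p, 0 < p < 1 -> continuous d2 p) ->
  0 < W ->
  (forall p, 0 < p < 1 ->
     (2 - alpha) * W * Rpower p (alpha - 2) + c' <= Rabs (d2 p) <=
     (2 - alpha) * W * Rpower p (alpha - 2) + c) ->
  exists C : R, 0 < C /\
    forall (Delta : R) (L : nat), 0 < Delta <= 1 -> (1 <= L)%nat ->
      Rbar_le (E_L phi L 0 Delta)
              (Finite (C * Rpower (Delta / (INR L) ^ 2) alpha)).
Proof.
  intros Ha _ Hcont Hd1 Hd2 _ HW Hbound.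
  set (A := (2 - alpha) * W + Rabs c).
  assert (HA : 0 < A) by (unfold A; pose proof (Rabs_pos c); nra).
  assert (Hd2A : forall p, 0 < p < 1 -> Rabs (d2 p) <= A * Rpower p (alpha - 2)).
  { intros p Hp. eapply Rle_trans; [apply (proj2 (Hbound p Hp)) |].
    apply Rpower_upper_bound_absorb; [nra | lra | lra]. }
  pose proof (holder_factor_pos alpha Ha).
  exists (4201 * 16 * A * holder_factor alpha). split; [nra |].
  intros D L HD HL.
  eapply Rbar_le_trans; [apply (E_L_le_jackson alpha A D phi d1 d2); auto; lra |].
  pose proof (Rpower_scale_le alpha D (INR L) (INR (L / 4) + 1) Ha ltac:(lra)
                (le_INR 1 L HL) ltac:(pose proof (pos_INR (L / 4)); lra)
                (INR_le_4_mul_div4_succ L)) as Hscale.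
  assert (HP : 0 <= 4201 * A * holder_factor alpha) by nra.
  pose proof (Rmult_le_compat_l _ _ _ HP Hscale). unfold Rbar_le. lra.
Qed.
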